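(* There is an algorithm that, given strings $A,B$ and a common supersequence $S$ of $A$ and $B$, computes a minimal common supersequence $S'$ of $A$ and $B$ with $S'\subseteq S$ in $O(|S|+|A|+|B|)$ time.
   Context: $X\subseteq S$ means $X$ is a (not necessarily contiguous) subsequence of $S$. A common supersequence of $A$ and $B$ is a string $C$ with $A\subseteq C$ and $B\subseteq C$; it is minimal if no proper subsequence of $C$ is a common supersequence of $A$ and $B$. Time is measured in the standard RAM model with $O(1)$-time character comparisons. *)

From mathcomp Require Import all_boot.
Set Implicit Arguments. Unset Strict Implicit. Unset Printing Implicit Defensive.

(* Strings are sequences of characters; characters are natural numbers
   (an integer alphabet), compared in O(1) time by the machine below.
   X ⊆ S  is  [subseq X S]  from MathComp (not necessarily contiguous). *)

Definition common_supersequence (A B C : seq nat) : bool :=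
  subseq A C && subseq B C.

Definition minimal_common_supersequence (A B C : seq nat) : Prop :=
  common_supersequence A B C /\
  forall X : seq nat, subseq X C -> X != C -> ~~ common_supersequence A B X.

(* Registers and memory cells hold natural numbers; registers and memory are
   indexed by natural numbers.  Every instruction costs one time unit. *)
Inductive instr : Type :=
| IConst (d n : nat)
| IAdd (d a b : nat)
| ISub (d a b : nat)       (* r[d] := r[a] - r[b] (truncated)  *)
| IEq (d a b : nat)
| ILt (d a b : nat)
| ILoad (d a : nat)
| IStore (a b : nat)
| IJz (a t : nat)
| IJmp (t : nat)
| IHalt.

Record state : Type := State { pc : nat; regs : nat -> nat; memory : nat -> nat }.

Definition upd (f : nat -> nat) (i v : nat) : nat -> nat :=
  fun j => if j == i then v else f j.

(* Fetch; a program counter outside the program means Halt. *)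
Definition fetch (p : seq instr) (s : state) : instr := nth IHalt p (pc s).

Definition halted (p : seq instr) (s : state) : bool :=
  if fetch p s is IHalt then true else false.

Definition step (p : seq instr) (s : state) : state :=
  let r := regs s in let m := memory s in let n := (pc s).+1 in
  match fetch p s with
  | IConst d k => State n (upd r d k) m
  | IAdd d a b => State n (upd r d (r a + r b)) m
  | ISub d a b => State n (upd r d (r a - r b)) m
  | IEq d a b => State n (upd r d (nat_of_bool (r a == r b))) m
  | ILt d a b => State n (upd r d (nat_of_bool (r a < r b))) m
  | ILoad d a => State n (upd r d (m (r a))) m
  | IStore a b => State n r (upd m (r a) (r b))
  | IJz a t => State (if r a == 0 then t else n) r m
  | IJmp t => State t r m
  | IHalt => s
  end.

Definition init_mem (A B S : seq nat) : nat -> nat :=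
  fun i => if i == 0 then size A else if i == 1 then size B
           else if i == 2 then size S else nth 0 (A ++ B ++ S) (i - 3).

Definition init_state (A B S : seq nat) : state :=
  State 0 (fun _ => 0) (init_mem A B S).

Definition output (m : nat -> nat) : seq nat := mkseq (fun i => m i.+1) (m 0).

From mathcomp Require Import all_boot zify.
Set Implicit Arguments. Unset Strict Implicit. Unset Printing Implicit Defensive.

(* Scan S from left to right and delete each character whose deletion leaves
   the kept prefix P followed by the unscanned rest Q a common supersequence of
   A and B.  The result C is minimal: a proper subsequence of C that is a common
   supersequence would remain one after deleting a single character c of C, but
   c was kept because deleting it failed against a longer remainder, and being
   a common supersequence is preserved by taking supersequences.
   Each test costs O(1): X is a subsequence of P ++ Q iff the longest prefix of
   X greedily embeddable in P and the longest suffix of X greedily embeddable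
   in Q together cover X.  The prefix matches of A and B in P are updated
   incrementally, and their suffix matches in every suffix of S are tabulated
   in advance by one right-to-left pass. *)

Section GreedyMatch.

Variable T : eqType.
Implicit Types (X P Q : seq T) (c : T).

Fixpoint prefix_match X P : nat :=
  match P, X with
  | c :: P', x :: X' => if x == c then (prefix_match X' P').+1 else prefix_match X P'
  | _, _ => 0
  end.

Lemma prefix_match_le X P : prefix_match X P <= size X.
Proof.
elim: P X => [|c P IH] [|x X] //=.
by case: eqP => _; [exact: IH | exact: (IH (x :: X))].
Qed.

Lemma subseq_take_prefix_match X P k :
  k <= size X -> subseq (take k X) P = (k <= prefix_match X P).
Proof.
elim: P X k => [|c P IH] [|x X] [|k] //= Hk.
case: ifP => _; first exact: IH.
exact: (IH (x :: X) k.+1).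
Qed.

Lemma prefix_match_rcons x0 X P c :
  prefix_match X (rcons P c) =
  prefix_match X P + ((prefix_match X P < size X) && (nth x0 X (prefix_match X P) == c)).
Proof. by elim: P X => [|d P IH] [|x X] //=; case: (x == d); rewrite IH. Qed.

Definition suffix_match X Q := prefix_match (rev X) (rev Q).

Lemma subseq_drop_suffix_match X Q k :
  k <= size X -> subseq (drop (size X - k) X) Q = (k <= suffix_match X Q).
Proof.
by move=> Hk; rewrite -subseq_rev -take_rev subseq_take_prefix_match // size_rev.
Qed.

Lemma suffix_match_cons x0 X Q c :
  suffix_match X (c :: Q) =
  suffix_match X Q + ((suffix_match X Q < size X) &&
                      (nth x0 X (size X - (suffix_match X Q).+1) == c)).
Proof.
rewrite /suffix_match rev_cons (prefix_match_rcons x0) size_rev.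
by case: ltnP => //= lt_m; rewrite nth_rev.
Qed.

Lemma subseq_cat_split X P Q :
  subseq X (P ++ Q) -> exists k, subseq (take k X) P /\ subseq (drop k X) Q.
Proof.
elim: P X => [|c P IH] X.
  by move=> sXQ; exists 0; rewrite take0 drop0 sub0seq.
case: X => [|x X] /=; first by exists 0; rewrite !sub0seq.
case: ifP => [/eqP-> | _] /IH[k [sXP sXQ]].
  by exists k.+1; rewrite /= eqxx.
by exists k; split=> //; apply: subseq_trans sXP (subseq_cons _ _).
Qed.

Lemma subseq_catE X P Q :
  subseq X (P ++ Q) = (size X <= prefix_match X P + suffix_match X Q).
Proof.
have le_pX := prefix_match_le X P.
apply/idP/idP => [/subseq_cat_split[k [sXP sXQ]] | le_X].
  case: (leqP (size X) k) => [le_Xk | lt_kX].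
    move: sXP; rewrite take_oversize // -[X in subseq X]take_size.
    by rewrite subseq_take_prefix_match // => /leq_trans->; rewrite ?leq_addr.
  have le_kp : k <= prefix_match X P by rewrite -subseq_take_prefix_match // ltnW.
  have le_ks : size X - k <= suffix_match X Q.
    by rewrite -subseq_drop_suffix_match ?leq_subr // subKn // ltnW.
  lia.
rewrite -(cat_take_drop (prefix_match X P) X) cat_subseq ?subseq_take_prefix_match //.
rewrite -{1}(subKn le_pX) subseq_drop_suffix_match ?leq_subr //; lia.
Qed.

End GreedyMatch.

Lemma subseq_neq_split (T : eqType) (X C : seq T) : subseq X C -> X != C ->
  exists C1 c C2, C = C1 ++ c :: C2 /\ subseq X (C1 ++ C2).
Proof.
elim: C X => [|c C IH] [|x X] //=.
  by move=> _ _; exists [::], c, C; rewrite sub0seq.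
case: eqP => [-> | _] sXC neq_X; last by exists [::], c, C.
have [|C1 [d [C2 [-> sX]]]] := IH _ sXC; first by apply: contraNneq neq_X => ->.
by exists (c :: C1), d, C2; rewrite /= eqxx.
Qed.

Section GreedyPruning.

Variables (T : eqType) (ok : pred (seq T)).
Hypothesis ok_subseq : forall X Y, subseq X Y -> ok X -> ok Y.

Definition prune_step P (c : T) Q := if ok (P ++ Q) then P else rcons P c.

Fixpoint prune P s :=
  if s is c :: s' then prune (prune_step P c s') s' else P.

Fixpoint prune_upto P s k {struct k} :=
  if k is k'.+1 then
    if s is c :: s' then prune_upto (prune_step P c s') s' k' else P
  else P.

Lemma prune_upto_size P s : prune_upto P s (size s) = prune P s.
Proof. by elim: s P => [|c s IH] P //=. Qed.

Lemma prune_uptoS x0 P s k : k < size s ->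
  prune_upto P s k.+1 = prune_step (prune_upto P s k) (nth x0 s k) (drop k.+1 s).
Proof.
elim: s P k => [|c s IH] P [|k] //= lt_ks; first by rewrite drop0.
exact: IH.
Qed.

Lemma prune_extends P s : exists2 K, prune P s = P ++ K & subseq K s.
Proof.
elim: s P => [|c s IH] P /=; first by exists [::]; rewrite ?cats0.
have [K -> sKS] := IH (prune_step P c s); rewrite /prune_step.
case: ifP => _; first by exists K => //; apply: subseq_trans sKS (subseq_cons _ _).
by exists (c :: K); rewrite ?cat_rcons //= eqxx.
Qed.

Lemma prune_ok P s : ok (P ++ s) -> ok (prune P s).
Proof.
elim: s P => [|c s IH] P /=; first by rewrite cats0.
rewrite /prune_step; case: ifP => okPS okPcS; apply: IH => //.
by rewrite cat_rcons.
Qed.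

(* Every character kept after [P] was kept because deleting it broke [ok]
   against a longer remainder; by monotonicity it still breaks [ok]. *)
Lemma prune_essential P s C1 c C2 :
  prune P s = C1 ++ c :: C2 -> size P <= size C1 -> ~~ ok (C1 ++ C2).
Proof.
elim: s P => [|d s IH] P /=; first by move=> ->; rewrite size_cat /=; lia.
rewrite {1}/prune_step; case: ifP => [_ | not_ok] eq_prune le_PC1.
  exact: IH eq_prune le_PC1.
case: (ltnP (size P) (size C1)) => [lt_PC1 | le_C1P].
  by apply: IH eq_prune _; rewrite size_rcons.
have [K eqK sKs] := prune_extends (rcons P d) s.
move: eq_prune; rewrite eqK -cats1 -catA /=.
have /eqP eq_size : size C1 == size P by rewrite eqn_leq le_C1P le_PC1.
move=> /(congr1 (fun s => (take (size P) s, drop (size P) s))).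
rewrite !take_size_cat ?drop_size_cat // => -[<- _ <-].
by apply: contraFN not_ok; apply: ok_subseq; rewrite subseq_cat2l.
Qed.

Lemma prune_subseq s : subseq (prune [::] s) s.
Proof. by have [K -> sKs] := prune_extends [::] s. Qed.

Lemma prune_minimal s : ok s ->
  [/\ ok (prune [::] s), subseq (prune [::] s) s &
      forall X, subseq X (prune [::] s) -> X != prune [::] s -> ~~ ok X].
Proof.
move=> oks; split=> [||X sX neqX]; [exact: prune_ok | exact: prune_subseq |].
have [C1 [c [C2 [eqC sXC]]]] := subseq_neq_split sX neqX.
by apply: contraNN (prune_essential eqC (leq0n _)); apply: ok_subseq.
Qed.

End GreedyPruning.

Lemma common_supersequence_subseq A B X Y : subseq X Y ->
  common_supersequence A B X -> common_supersequence A B Y.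
Proof.
by move=> sXY /andP[sAX sBX]; rewrite /common_supersequence !(subseq_trans _ sXY).
Qed.

(* Register roles: r0 = 0, r7 = 1, r1 r2 r3 = |A| |B| |S|, r16 r17 = addresses
   of B and S, r8 = loop index, r9 r10 = current match lengths for A and B,
   r11 = number of kept characters, r12..r15 scratch.  Memory above the input
   holds two tables indexed by t <= |S| (base r4: suffix_match A (drop t S);
   base r5: the same for B) followed by the output buffer (base r6).  The
   program fills the tables right to left (pc 17-41), prunes S left to right
   (pc 46-82) and copies the buffer to the output cells (pc 84-93). *)
Definition prog : seq instr := [::
 (*0*) IConst 7 1; IConst 12 0; ILoad 1 12; ILoad 2 7; IConst 13 2;
 (*5*) ILoad 3 13; IConst 13 3; IAdd 16 13 1; IAdd 17 16 2; IAdd 4 17 3;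
 (*10*) IAdd 5 4 3; IAdd 5 5 7; IAdd 6 5 3; IAdd 6 6 7; IAdd 8 3 0;
 (*15*) IConst 9 0; IConst 10 0; IJz 8 42; ISub 8 8 7; IAdd 12 17 8;
 (*20*) ILoad 13 12; ILt 14 9 1; IJz 14 29; ISub 12 16 7; ISub 12 12 9;
 (*25*) ILoad 15 12; IEq 14 15 13; IJz 14 29; IAdd 9 9 7; ILt 14 10 2;
 (*30*) IJz 14 37; ISub 12 17 7; ISub 12 12 10; ILoad 15 12; IEq 14 15 13;
 (*35*) IJz 14 37; IAdd 10 10 7; IAdd 12 4 8; IStore 12 9; IAdd 12 5 8;
 (*40*) IStore 12 10; IJmp 17; IConst 8 0; IConst 9 0; IConst 10 0;
 (*45*) IConst 11 0; ILt 14 8 3; IJz 14 83; IAdd 12 4 8; IAdd 12 12 7;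
 (*50*) ILoad 13 12; IAdd 13 13 9; ILt 14 13 1; IJz 14 55; IJmp 61;
 (*55*) IAdd 12 5 8; IAdd 12 12 7; ILoad 13 12; IAdd 13 13 10; ILt 14 13 2;
 (*60*) IJz 14 81; IAdd 12 17 8; ILoad 13 12; IAdd 12 6 11; IStore 12 13;
 (*65*) IAdd 11 11 7; ILt 14 9 1; IJz 14 74; IConst 15 3; IAdd 12 15 9;
 (*70*) ILoad 15 12; IEq 14 15 13; IJz 14 74; IAdd 9 9 7; ILt 14 10 2;
 (*75*) IJz 14 81; IAdd 12 16 10; ILoad 15 12; IEq 14 15 13; IJz 14 81;
 (*80*) IAdd 10 10 7; IAdd 8 8 7; IJmp 46; IConst 8 0; ILt 14 8 11;
 (*85*) IJz 14 92; IAdd 12 6 8; ILoad 13 12; IAdd 12 8 7; IStore 12 13;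
 (*90*) IAdd 8 8 7; IJmp 84; IConst 12 0; IStore 12 11; IHalt ].

Definition reaches (s : state) (K : nat) (Q : state -> Prop) :=
  exists2 n, n <= K & Q (iter n (step prog) s).

Lemma reaches_now s K (Q : state -> Prop) : Q s -> reaches s K Q.
Proof. by exists 0. Qed.

Lemma reaches_step s K Q : reaches (step prog s) K Q -> reaches s K.+1 Q.
Proof. by case=> n le_nK Qs; exists n.+1; rewrite // iterSr. Qed.

Lemma reaches_le s K K' Q : K <= K' -> reaches s K Q -> reaches s K' Q.
Proof. by move=> le_KK' [n le_nK Qs]; exists n => //; apply: leq_trans le_KK'. Qed.

Lemma reaches_impl s K (Q1 Q2 : state -> Prop) :
  reaches s K Q1 -> (forall s', Q1 s' -> Q2 s') -> reaches s K Q2.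
Proof. by case=> n le_nK Q1s Q12; exists n; last exact: Q12. Qed.

Lemma reaches_seq s K1 K2 Q1 Q2 :
  reaches s K1 Q1 -> (forall s', Q1 s' -> reaches s' K2 Q2) -> reaches s (K1 + K2) Q2.
Proof.
case=> n1 le_n1 Q1s /(_ _ Q1s)[n2 le_n2 Q2s].
by exists (n2 + n1); rewrite ?iterD // addnC leq_add.
Qed.

Lemma init_mem0 A B S : init_mem A B S 0 = size A. Proof. by []. Qed.
Lemma init_mem1 A B S : init_mem A B S 1 = size B. Proof. by []. Qed.
Lemma init_mem2 A B S : init_mem A B S 2 = size S. Proof. by []. Qed.

Arguments upd f i v j /.

Definition layout (A B S : seq nat) (r : nat -> nat) :=
  r 0 = 0 /\ r 1 = size A /\ r 2 = size B /\ r 3 = size S /\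
  r 4 = 3 + size A + size B + size S /\
  r 5 = 4 + size A + size B + size S + size S /\
  r 6 = 5 + size A + size B + size S + size S + size S /\
  r 7 = 1 /\ r 16 = 3 + size A /\ r 17 = 3 + size A + size B.

(* Symbolic execution: [exec] runs one instruction and substitutes the known
   register values; [decide_eqs] settles the address comparisons made by [upd]. *)
Ltac subst_regs := repeat match goal with
  | H : ?r ?n = _ |- context[?r ?n] => is_var r; rewrite H
  end.

Ltac exec := apply reaches_step; unfold step, fetch, prog; simpl;
  rewrite ?init_mem0 ?init_mem1 ?init_mem2; subst_regs.

Ltac decide_eqs := repeat match goal with
  | |- context[(?a == ?b)] =>
      (have -> : (a == b) = false by apply/eqP; lia) ||
      (have -> : (a == b) = true by apply/eqP; lia)
  end.

Ltac close_layout := apply: reaches_now; rewrite /layout /=; repeat split => //; lia.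

Lemma setup A B S : reaches (init_state A B S) 17 (fun s => pc s = 17 /\
  layout A B S (regs s) /\ regs s 8 = size S /\ regs s 9 = 0 /\ regs s 10 = 0 /\
  memory s = init_mem A B S).
Proof. rewrite /init_state; do 17 exec; close_layout. Qed.

Definition input_end (A B S : seq nat) := 3 + size A + size B + size S.

Lemma init_mem_A A B S i u : i = 3 + u -> u < size A -> init_mem A B S i = nth 0 A u.
Proof. by move=> -> lt_uA; rewrite /init_mem /= addKn nth_cat lt_uA. Qed.

Lemma init_mem_B A B S i u :
  i = 3 + size A + u -> u < size B -> init_mem A B S i = nth 0 B u.
Proof.
move=> -> lt_uB; rewrite /init_mem /= -addnA addKn.
by rewrite nth_cat ltnNge leq_addr /= addKn nth_cat lt_uB.
Qed.

Lemma init_mem_S A B S i u :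
  i = 3 + size A + size B + u -> init_mem A B S i = nth 0 S u.
Proof.
move=> ->; rewrite /init_mem /= -!addnA addKn.
by rewrite nth_cat ltnNge leq_addr /= addKn nth_cat ltnNge leq_addr /= addKn.
Qed.

Lemma init_mem_above A B S i : input_end A B S <= i -> init_mem A B S i = 0.
Proof.
rewrite /input_end /init_mem => le_i.
by decide_eqs; rewrite nth_default // !size_cat; lia.
Qed.

Definition input_intact A B S (m : nat -> nat) :=
  forall i, i < input_end A B S -> m i = init_mem A B S i.

Section ReadInput.

Variables (A B S : seq nat) (m : nat -> nat).
Hypothesis intact : input_intact A B S m.

Lemma read_A i u : i = 3 + u -> u < size A -> m i = nth 0 A u.
Proof.
move=> Ei lt_uA; rewrite intact; first exact: (init_mem_A _ _ Ei lt_uA).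
by rewrite Ei /input_end; lia.
Qed.

Lemma read_B i u : i = 3 + size A + u -> u < size B -> m i = nth 0 B u.
Proof.
move=> Ei lt_uB; rewrite intact; first exact: (init_mem_B _ Ei lt_uB).
by rewrite Ei /input_end; lia.
Qed.

Lemma read_S i u : i = 3 + size A + size B + u -> u < size S -> m i = nth 0 S u.
Proof.
move=> Ei lt_uS; rewrite intact; first exact: (init_mem_S _ Ei).
by rewrite Ei /input_end; lia.
Qed.

End ReadInput.

Lemma suffix_step_A A B S r m t x y :
  layout A B S r -> r 8 = t.+1 -> r 9 = x -> r 10 = y ->
  t < size S -> input_intact A B S m ->
  reaches (State 17 r m) 12 (fun s => pc s = 29 /\ layout A B S (regs s) /\
    regs s 8 = t /\
    regs s 9 = x + ((x < size A) && (nth 0 A (size A - x.+1) == nth 0 S t)) /\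
    regs s 10 = y /\ regs s 13 = nth 0 S t /\ memory s = m).
Proof.
move=> [R0 [R1 [R2 [R3 [R4 [R5 [R6 [R7 [R16 R17]]]]]]]]] R8 R9 R10 lt_tS intact.
do 4 exec; rewrite (read_S (u := t) intact); [|lia|lia].
exec; case lt_xA: (x < size A); last by exec; close_layout.
do 4 exec; rewrite (read_A (u := size A - x.+1) intact); [|lia|lia].
exec; case: (_ == _); [do 2 exec | exec]; close_layout.
Qed.

Lemma suffix_step_B A B S r m t x y c :
  layout A B S r -> r 8 = t -> r 9 = x -> r 10 = y -> r 13 = c ->
  input_intact A B S m ->
  reaches (State 29 r m) 8 (fun s => pc s = 37 /\ layout A B S (regs s) /\
    regs s 8 = t /\ regs s 9 = x /\
    regs s 10 = y + ((y < size B) && (nth 0 B (size B - y.+1) == c)) /\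
    memory s = m).
Proof.
move=> [R0 [R1 [R2 [R3 [R4 [R5 [R6 [R7 [R16 R17]]]]]]]]] R8 R9 R10 R13 intact.
exec; case lt_yB: (y < size B); last by exec; close_layout.
do 4 exec; rewrite (read_B (u := size B - y.+1) intact); [|lia|lia].
exec; case: (_ == _); [do 2 exec | exec]; close_layout.
Qed.

Lemma suffix_store A B S r m t x y :
  layout A B S r -> r 8 = t -> r 9 = x -> r 10 = y ->
  reaches (State 37 r m) 5 (fun s => pc s = 17 /\ layout A B S (regs s) /\
    regs s 8 = t /\ regs s 9 = x /\ regs s 10 = y /\
    memory s = upd (upd m (3 + size A + size B + size S + t) x)
                   (4 + size A + size B + size S + size S + t) y).
Proof.
move=> [R0 [R1 [R2 [R3 [R4 [R5 [R6 [R7 [R16 R17]]]]]]]]] R8 R9 R10.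
by do 5 exec; close_layout.
Qed.

Definition suffix_tables A B S (m : nat -> nat) t := input_intact A B S m /\
  forall u, t <= u <= size S ->
    m (3 + size A + size B + size S + u) = suffix_match A (drop u S) /\
    m (4 + size A + size B + size S + size S + u) = suffix_match B (drop u S).

Definition suffix_inv A B S t s :=
  pc s = 17 /\ layout A B S (regs s) /\ regs s 8 = t /\
  regs s 9 = suffix_match A (drop t S) /\ regs s 10 = suffix_match B (drop t S) /\
  suffix_tables A B S (memory s) t /\ t <= size S.

Lemma suffix_inv_init A B S s :
  pc s = 17 -> layout A B S (regs s) -> regs s 8 = size S ->
  regs s 9 = 0 -> regs s 10 = 0 -> memory s = init_mem A B S ->
  suffix_inv A B S (size S) s.
Proof.
move=> pc_s lay R8 R9 R10 mem; rewrite /suffix_inv mem drop_size R9 R10.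
do 6 (split=> //); split=> [//|u le_u].
have -> : u = size S by lia.
by rewrite drop_size !init_mem_above // /input_end; lia.
Qed.

Lemma suffix_iter A B S t s :
  suffix_inv A B S t.+1 s -> reaches s 25 (suffix_inv A B S t).
Proof.
case: s => p r m [/= -> [lay [R8 [R9 [R10 [[intact tables] lt_tS]]]]]].
apply: reaches_seq (suffix_step_A lay R8 R9 R10 lt_tS intact) _.
case=> p1 r1 m1 /= [-> [lay1 [R81 [R91 [R101 [R131 ->]]]]]].
apply: reaches_seq (suffix_step_B lay1 R81 R91 R101 R131 intact) _.
case=> p2 r2 m2 /= [-> [lay2 [R82 [R92 [R102 ->]]]]].
apply: (reaches_impl (suffix_store m lay2 R82 R92 R102)).
case=> p3 r3 m3 /= [-> [lay3 [R83 [R93 [R103 ->]]]]].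
have dropS : drop t S = nth 0 S t :: drop t.+1 S by rewrite (drop_nth 0).
rewrite /suffix_inv /= R93 R103 dropS !(suffix_match_cons 0).
do 5 (split=> //); split; last lia.
split=> [i lt_i | u le_u] /=.
  by rewrite /input_end in lt_i; decide_eqs; apply: intact.
case: (ltnP t u) => [lt_tu | le_ut].
  by have [-> ->] := tables u (ltac:(lia)); decide_eqs.
have -> : u = t by lia.
by decide_eqs; rewrite dropS !(suffix_match_cons 0).
Qed.

Lemma suffix_loop A B S t s : suffix_inv A B S t s ->
  reaches s (25 * t + 1) (fun s =>
    [/\ pc s = 42, layout A B S (regs s) & suffix_tables A B S (memory s) 0]).
Proof.
elim: t s => [|t IH] s.
  by case: s => p r m [/= -> [lay [R8 [_ [_ [tables _]]]]]]; exec; apply: reaches_now.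
move=> inv; apply: (@reaches_le _ (25 + (25 * t + 1))); first lia.
exact: reaches_seq (suffix_iter inv) IH.
Qed.

Section ReadSuffixTables.

Variables (A B S : seq nat) (m : nat -> nat).
Hypothesis tables : suffix_tables A B S m 0.

Lemma read_suffix_A i u : i = 3 + size A + size B + size S + u ->
  u <= size S -> m i = suffix_match A (drop u S).
Proof. by move=> -> le_uS; case: tables => _ /(_ u (ltac:(lia)))[]. Qed.

Lemma read_suffix_B i u : i = 4 + size A + size B + size S + size S + u ->
  u <= size S -> m i = suffix_match B (drop u S).
Proof. by move=> -> le_uS; case: tables => _ /(_ u (ltac:(lia)))[]. Qed.

End ReadSuffixTables.

Lemma prune_test A B S r m k i j L :
  layout A B S r -> r 8 = k -> r 9 = i -> r 10 = j -> r 11 = L ->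
  k < size S -> suffix_tables A B S m 0 ->
  reaches (State 46 r m) 14 (fun s =>
    pc s = (if (suffix_match A (drop k.+1 S) + i < size A) ||
               (suffix_match B (drop k.+1 S) + j < size B) then 61 else 81) /\
    layout A B S (regs s) /\ regs s 8 = k /\ regs s 9 = i /\ regs s 10 = j /\
    regs s 11 = L /\ memory s = m).
Proof.
move=> [R0 [R1 [R2 [R3 [R4 [R5 [R6 [R7 [R16 R17]]]]]]]]] R8 R9 R10 R11 lt_kS tables.
exec; rewrite lt_kS /=.
do 4 exec; rewrite (read_suffix_A (u := k.+1) tables); [|lia|lia].
do 2 exec; case: (_ < size A); first by do 2 exec; close_layout.
do 4 exec; rewrite (read_suffix_B (u := k.+1) tables); [|lia|lia].
by do 2 exec; case: (_ < size B); exec; close_layout.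
Qed.

Lemma prune_keep A B S r m k i j L :
  layout A B S r -> r 8 = k -> r 9 = i -> r 10 = j -> r 11 = L ->
  k < size S -> input_intact A B S m ->
  reaches (State 61 r m) 5 (fun s => pc s = 66 /\
    layout A B S (regs s) /\ regs s 8 = k /\ regs s 9 = i /\ regs s 10 = j /\
    regs s 11 = L + 1 /\ regs s 13 = nth 0 S k /\
    memory s = upd m (5 + size A + size B + size S + size S + size S + L) (nth 0 S k)).
Proof.
move=> [R0 [R1 [R2 [R3 [R4 [R5 [R6 [R7 [R16 R17]]]]]]]]] R8 R9 R10 R11 lt_kS intact.
do 2 exec; rewrite (read_S (u := k) intact); [|lia|lia].
by do 3 exec; close_layout.
Qed.

Lemma prefix_step_A A B S r m k i j L c :
  layout A B S r -> r 8 = k -> r 9 = i -> r 10 = j -> r 11 = L -> r 13 = c ->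
  input_intact A B S m ->
  reaches (State 66 r m) 8 (fun s => pc s = 74 /\
    layout A B S (regs s) /\ regs s 8 = k /\
    regs s 9 = i + ((i < size A) && (nth 0 A i == c)) /\ regs s 10 = j /\
    regs s 11 = L /\ regs s 13 = c /\ memory s = m).
Proof.
move=> [R0 [R1 [R2 [R3 [R4 [R5 [R6 [R7 [R16 R17]]]]]]]]] R8 R9 R10 R11 R13 intact.
exec; case lt_iA: (i < size A); last by exec; close_layout.
do 4 exec; rewrite (read_A (u := i) intact); [|lia|lia].
exec; case: (_ == _); [do 2 exec | exec]; close_layout.
Qed.

Lemma prefix_step_B A B S r m k i j L c :
  layout A B S r -> r 8 = k -> r 9 = i -> r 10 = j -> r 11 = L -> r 13 = c ->
  input_intact A B S m ->
  reaches (State 74 r m) 7 (fun s => pc s = 81 /\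
    layout A B S (regs s) /\ regs s 8 = k /\ regs s 9 = i /\
    regs s 10 = j + ((j < size B) && (nth 0 B j == c)) /\
    regs s 11 = L /\ memory s = m).
Proof.
move=> [R0 [R1 [R2 [R3 [R4 [R5 [R6 [R7 [R16 R17]]]]]]]]] R8 R9 R10 R11 R13 intact.
exec; case lt_jB: (j < size B); last by exec; close_layout.
do 3 exec; rewrite (read_B (u := j) intact); [|lia|lia].
exec; case: (_ == _); [do 2 exec | exec]; close_layout.
Qed.

Lemma prune_next A B S r m k i j L :
  layout A B S r -> r 8 = k -> r 9 = i -> r 10 = j -> r 11 = L ->
  reaches (State 81 r m) 2 (fun s => pc s = 46 /\
    layout A B S (regs s) /\ regs s 8 = k.+1 /\ regs s 9 = i /\ regs s 10 = j /\
    regs s 11 = L /\ memory s = m).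
Proof.
move=> [R0 [R1 [R2 [R3 [R4 [R5 [R6 [R7 [R16 R17]]]]]]]]] R8 R9 R10 R11.
by do 2 exec; close_layout.
Qed.

Lemma append_kept A B S r m k i j L :
  layout A B S r -> r 8 = k -> r 9 = i -> r 10 = j -> r 11 = L ->
  k < size S -> input_intact A B S m ->
  reaches (State 61 r m) 22 (fun s => pc s = 46 /\
    layout A B S (regs s) /\ regs s 8 = k.+1 /\
    regs s 9 = i + ((i < size A) && (nth 0 A i == nth 0 S k)) /\
    regs s 10 = j + ((j < size B) && (nth 0 B j == nth 0 S k)) /\
    regs s 11 = L + 1 /\
    memory s = upd m (5 + size A + size B + size S + size S + size S + L) (nth 0 S k)).
Proof.
move=> lay R8 R9 R10 R11 lt_kS intact.
set m' := upd m _ _.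
have intact' : input_intact A B S m'.
  by move=> a lt_a; rewrite /m' /=; rewrite /input_end in lt_a; decide_eqs; apply: intact.
apply: reaches_seq (prune_keep lay R8 R9 R10 R11 lt_kS intact) _.
case=> p1 r1 m1 /= [-> [lay1 [R81 [R91 [R101 [R111 [R131 ->]]]]]]].
apply: reaches_seq (prefix_step_A lay1 R81 R91 R101 R111 R131 intact') _.
case=> p2 r2 m2 /= [-> [lay2 [R82 [R92 [R102 [R112 [R132 ->]]]]]]].
apply: reaches_seq (prefix_step_B lay2 R82 R92 R102 R112 R132 intact') _.
case=> p3 r3 m3 /= [-> [lay3 [R83 [R93 [R103 [R113 ->]]]]]].
by apply: (reaches_impl (prune_next m' lay3 R83 R93 R103 R113)).
Qed.

Local Notation kept A B S k := (prune_upto (common_supersequence A B) [::] S k).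
Local Notation pruned A B S := (prune (common_supersequence A B) [::] S).

Definition buffer_holds (A B S : seq nat) (m : nat -> nat) (P : seq nat) :=
  forall u, u < size P ->
    m (5 + size A + size B + size S + size S + size S + u) = nth 0 P u.

Definition prune_inv A B S k s :=
  pc s = 46 /\ layout A B S (regs s) /\ regs s 8 = k /\
  regs s 9 = prefix_match A (kept A B S k) /\ regs s 10 = prefix_match B (kept A B S k) /\
  regs s 11 = size (kept A B S k) /\ suffix_tables A B S (memory s) 0 /\
  buffer_holds A B S (memory s) (kept A B S k) /\ k <= size S.

Lemma prune_inv_init A B S s :
  pc s = 42 -> layout A B S (regs s) -> suffix_tables A B S (memory s) 0 ->
  reaches s 4 (prune_inv A B S 0).
Proof.
case: s => p r m /= -> lay tables.
move: (lay) => [R0 [R1 [R2 [R3 [R4 [R5 [R6 [R7 [R16 R17]]]]]]]]].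
by do 4 exec; apply: reaches_now; rewrite /prune_inv /=.
Qed.

Lemma prune_iter A B S k s : prune_inv A B S k s -> k < size S ->
  reaches s 36 (prune_inv A B S k.+1).
Proof.
case: s => p r m [/= -> [lay [R8 [R9 [R10 [R11 [tables [buf _]]]]]]]] lt_kS.
set P := kept A B S k in R9 R10 R11 buf.
have keptS : kept A B S k.+1 =
    prune_step (common_supersequence A B) P (nth 0 S k) (drop k.+1 S).
  by rewrite (prune_uptoS _ 0).
have not_ok : ~~ common_supersequence A B (P ++ drop k.+1 S) =
    (suffix_match A (drop k.+1 S) + prefix_match A P < size A) ||
    (suffix_match B (drop k.+1 S) + prefix_match B P < size B).
  rewrite /common_supersequence !subseq_catE negb_and -!ltnNge.
  by rewrite [prefix_match A P + _]addnC [prefix_match B P + _]addnC.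
apply: reaches_seq (prune_test lay R8 R9 R10 R11 lt_kS tables) _.
case=> p1 r1 m1 /= [-> [lay1 [R81 [R91 [R101 [R111 ->]]]]]].
rewrite -not_ok; move: keptS; rewrite /prune_step; case: ifP => _ keptS /=.
  apply: (@reaches_le _ 2) => //.
  apply: (reaches_impl (prune_next m lay1 R81 R91 R101 R111)).
  case=> p2 r2 m2 /= [-> [lay2 [R82 [R92 [R102 [R112 ->]]]]]].
  by rewrite /prune_inv keptS; do 8 (split=> //); lia.
case: (tables) => intact _.
apply: reaches_impl (append_kept lay1 R81 R91 R101 R111 lt_kS intact) _.
case=> p2 r2 m2 /= [-> [lay2 [R82 [R92 [R102 [R112 ->]]]]]].
rewrite /prune_inv keptS /= R92 R102 R112 !(prefix_match_rcons 0) size_rcons addn1.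
do 6 (split=> //); split; last (split; last lia).
  case: tables => _ tables; split=> [a lt_a | u le_u] /=.
    by rewrite /input_end in lt_a; decide_eqs; apply: intact.
  by decide_eqs; apply: tables.
move=> u; rewrite size_rcons ltnS leq_eqVlt => /orP[/eqP-> | lt_u] /=; decide_eqs.
  by rewrite nth_rcons ltnn eqxx.
by rewrite nth_rcons lt_u buf.
Qed.

Lemma prune_loop A B S d k s : prune_inv A B S k s -> size S - k = d ->
  reaches s (36 * d + 2) (fun s => pc s = 83 /\ layout A B S (regs s) /\
    regs s 11 = size (pruned A B S) /\ buffer_holds A B S (memory s) (pruned A B S)).
Proof.
elim: d k s => [|d IH] k s inv def_d.
  have def_k : k = size S by case: inv => [_ [_ [_ [_ [_ [_ [_ [_ ?]]]]]]]]; lia.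
  subst k; move: inv; rewrite /prune_inv prune_upto_size.
  case: s => p r m [/= -> [lay [R8 [_ [_ [R11 [_ [buf _]]]]]]]].
  have R3 : r 3 = size S by case: lay => [_ [_ [_ [? _]]]].
  by exec; rewrite ltnn /=; exec; apply: reaches_now.
apply: (@reaches_le _ (36 + (36 * d + 2))); first lia.
apply: reaches_seq (prune_iter inv _) _ => [|s' inv']; first lia.
by apply: IH inv' _; lia.
Qed.

Definition copy_inv A B S (C : seq nat) t s :=
  pc s = 84 /\ layout A B S (regs s) /\ regs s 8 = t /\ regs s 11 = size C /\
  t <= size C /\ buffer_holds A B S (memory s) C /\
  forall u, u < t -> memory s (1 + u) = nth 0 C u.

Lemma copy_inv_init A B S C s :
  pc s = 83 -> layout A B S (regs s) -> regs s 11 = size C ->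
  buffer_holds A B S (memory s) C -> reaches s 1 (copy_inv A B S C 0).
Proof.
case: s => p r m /= -> lay R11 buf.
move: (lay) => [R0 [R1 [R2 [R3 [R4 [R5 [R6 [R7 [R16 R17]]]]]]]]].
by exec; apply: reaches_now; rewrite /copy_inv /=.
Qed.

Lemma copy_loop A B S C d t s : size C <= size S ->
  copy_inv A B S C t s -> size C - t = d ->
  reaches s (8 * d + 4) (fun s => pc s = 94 /\ output (memory s) = C).
Proof.
move=> le_CS; elim: d t s => [|d IH] t s.
all: case: s => p r m [/= -> [lay [R8 [R11 [le_tC [buf out]]]]]] def_d.
all: move: (lay) => [R0 [R1 [R2 [R3 [R4 [R5 [R6 [R7 [R16 R17]]]]]]]]].
  have def_t : t = size C by lia.
  rewrite {}def_t in R8 out; exec; rewrite ltnn /=; do 3 exec.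
  apply: reaches_now; split=> //=.
  apply: (@eq_from_nth _ 0) => [|u]; rewrite size_mkseq //= => lt_uC.
  by rewrite /output /= nth_mkseq // -add1n out.
have lt_tC : t < size C by lia.
apply: (@reaches_le _ (8 + (8 * d + 4))); first lia.
apply: (@reaches_seq _ 8 _ (copy_inv A B S C t.+1)) => [|s' inv']; last first.
  by apply: IH inv' _; lia.
exec; rewrite lt_tC /=; do 3 exec; rewrite buf; last lia.
do 4 exec; apply: reaches_now; rewrite /copy_inv /layout /=.
do 5 (split; first by lia).
split=> [u lt_uC | u] /=; first by decide_eqs; rewrite buf.
by rewrite ltnS leq_eqVlt => /orP[/eqP-> | lt_ut]; decide_eqs => //; apply: out.
Qed.

Lemma prog_computes_prune A B S :
  reaches (init_state A B S) (100 * (size S + size A + size B) + 100)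
    (fun s => pc s = 94 /\ output (memory s) = pruned A B S).
Proof.
have le_CS : size (pruned A B S) <= size S by exact/size_subseq/prune_subseq.
apply: (@reaches_le _ (17 + ((25 * size S + 1) + (4 + ((36 * (size S - 0) + 2) +
                         (1 + (8 * (size (pruned A B S) - 0) + 4))))))); first lia.
apply: reaches_seq (setup A B S) _ => s0 [pc0 [lay0 [R8 [R9 [R10 mem0]]]]].
have inv1 := suffix_inv_init pc0 lay0 R8 R9 R10 mem0.
apply: reaches_seq (suffix_loop inv1) _ => s1 [pc1 lay1 tables1].
apply: reaches_seq (prune_inv_init pc1 lay1 tables1) _ => s2 inv2.
apply: reaches_seq (prune_loop inv2 erefl) _ => s3 [pc3 [lay3 [R11 buf3]]].
apply: reaches_seq (copy_inv_init pc3 lay3 R11 buf3) _ => s4 inv4.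
exact: copy_loop le_CS inv4 erefl.
Qed.

Theorem mainTheorem4 :
  exists (p : seq instr) (c : nat),
    forall A B S : seq nat, subseq A S -> subseq B S ->
      exists n : nat,
        n <= c * (size S + size A + size B) + c /\
        let s := iter n (step p) (init_state A B S) in
        halted p s /\
        minimal_common_supersequence A B (output (memory s)) /\
        subseq (output (memory s)) S.
Proof.
exists prog, 100 => A B S sAS sBS.
have [n le_n [pc_s out]] := prog_computes_prune A B S.
have okS : common_supersequence A B S by rewrite /common_supersequence sAS sBS.
have [ok_C sCS minC] := prune_minimal (@common_supersequence_subseq A B) okS.
by exists n; rewrite /= out /halted /fetch pc_s.
Qed.
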